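(* Let $(X,Y)$ be a splitting of a finite Weyl group $W$, and let $x_0\in X$ and $y_0\in Y$ be the unique maximal elements of $X$ in left weak order and of $Y$ in right weak order respectively (so that $x_0y_0=w_0$). Define $\varphi,\psi:W\to W$ by $\varphi(u)=ux_0^{-1}$ and $\psi(u)=w_0y_0^{-1}uw_0=x_0uw_0$. Then $(\varphi(X),\psi(Y))$ is also a splitting of $W$, and its left-maximal and right-maximal elements are $x_0^{-1}$ and $x_0w_0=w_0y_0^{-1}w_0$ respectively.
   Context: $W$ is the Weyl group of a finite crystallographic root system, with Coxeter length $\ell$ and longest element $w_0$. Left weak order: $v\leq_L w$ iff $w=zv$ with $\ell(w)=\ell(z)+\ell(v)$; right weak order: $v\leq_R w$ iff $w=vz$ with $\ell(w)=\ell(v)+\ell(z)$. A pair $(X,Y)$ of subsets of $W$ is a splitting of $W$ if the map $X\times Y\to W$, $(x,y)\mapsto xy$, is a bijection with $\ell(xy)=\ell(x)+\ell(y)$ for all $x\in X,y\in Y$. For any splitting, $X$ has a unique maximal element in left weak order and $Y$ has a unique maximal element in right weak order, and their product is $w_0$. *)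

From HB Require Import structures.
From mathcomp Require Import all_boot all_order all_algebra.
From mathcomp Require Import reals.
Set Implicit Arguments. Unset Strict Implicit. Unset Printing Implicit Defensive.
Import Order.TTheory GRing.Theory Num.Theory.
Local Open Scope ring_scope.

Section WeylDefs.
Variables (R : realType) (n : nat).

Definition dotv (u v : 'rV[R]_n) : R := (u *m v^T) 0 0.

(* orthogonal reflection in the hyperplane orthogonal to a:
   x *m refl a = x - (2 (x,a)/(a,a)) a *)
Definition refl (a : 'rV[R]_n) : 'M[R]_n :=
  1%:M - (2 / dotv a a) *: (a^T *m a).

Definition is_root_system (Phi : seq 'rV[R]_n) : Prop :=
  [/\ uniq Phi,
      0 \notin Phi,
      (forall a b, a \in Phi -> b \in Phi -> b *m refl a \in Phi),
      (forall a b, a \in Phi -> b \in Phi ->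
         exists z : int, 2 * dotv b a / dotv a a = z%:~R) &
      (forall a (c : R), a \in Phi -> c *: a \in Phi -> c = 1 \/ c = -1)].

Definition inW (Phi : seq 'rV[R]_n) (w : 'M[R]_n) : Prop :=
  exists s : seq 'rV[R]_n,
    all (fun a => a \in Phi) s /\ w = foldr (fun a m => refl a *m m) 1%:M s.

(* A regular vector v determines the positive system
   Phi^+ = {a in Phi | (v,a) > 0}. *)
Definition regular (Phi : seq 'rV[R]_n) (v : 'rV[R]_n) : Prop :=
  forall a, a \in Phi -> dotv v a != 0.

(* Coxeter length w.r.t. this positive system: number of positive roots
   sent to negative roots. *)
Definition len (Phi : seq 'rV[R]_n) (v : 'rV[R]_n) (w : 'M[R]_n) : nat :=
  count (fun a => (0 < dotv v a) && (dotv v (a *m w) < 0)) Phi.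

Definition is_longest Phi v (w0 : 'M[R]_n) : Prop :=
  inW Phi w0 /\ forall w, inW Phi w -> (len Phi v w <= len Phi v w0)%N.

Definition leL Phi v (u w : 'M[R]_n) : Prop :=
  inW Phi u /\ inW Phi w /\
  exists z, inW Phi z /\ w = z *m u /\ len Phi v w = (len Phi v z + len Phi v u)%N.

Definition leR Phi v (u w : 'M[R]_n) : Prop :=
  inW Phi u /\ inW Phi w /\
  exists z, inW Phi z /\ w = u *m z /\ len Phi v w = (len Phi v u + len Phi v z)%N.

Definition splitting Phi v (X Y : 'M[R]_n -> Prop) : Prop :=
  [/\ (forall x, X x -> inW Phi x),
      (forall y, Y y -> inW Phi y),
      (forall w, inW Phi w ->
         exists x y, [/\ X x, Y y & w = x *m y]),
      (forall x1 y1 x2 y2, X x1 -> Y y1 -> X x2 -> Y y2 ->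
         x1 *m y1 = x2 *m y2 -> x1 = x2 /\ y1 = y2) &
      (forall x y, X x -> Y y ->
         len Phi v (x *m y) = (len Phi v x + len Phi v y)%N)].

Definition maxL Phi v (X : 'M[R]_n -> Prop) (x0 : 'M[R]_n) : Prop :=
  X x0 /\ forall x, X x -> leL Phi v x x0.
Definition maxR Phi v (Y : 'M[R]_n -> Prop) (y0 : 'M[R]_n) : Prop :=
  Y y0 /\ forall y, Y y -> leR Phi v y y0.

End WeylDefs.

(* The longest
   element w0 inverts every positive root, so l(w w0) = N - l(w), N being the number
   of positive roots, and l(w^-1) = l(w).  If x <=_L x0 then l(x x0^-1) = l(x0) - l(x),
   and for y in Y, l(x0 y w0) = N - l(x0) - l(y); since (x x0^-1)(x0 y w0) = x y w0
   has length N - l(x) - l(y), lengths add up for the pair (X x0^-1, x0 Y w0).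
   The deep input is that 1 is the only element of length 0 (so 1 lies in X and Y,
   and x0 y0 = w0 as the unique element of length N).  It is proved with simple roots,
   the indecomposable positive roots: a simple reflection permutes the other positive
   roots and so changes the length by one, and a word longer than the length of its
   product admits a deletion. *)

From HB Require Import structures.
From mathcomp Require Import all_boot all_order all_algebra.
From mathcomp Require Import reals.
From mathcomp Require Import zify ring lra.
Set Implicit Arguments. Unset Strict Implicit. Unset Printing Implicit Defensive.
Import Order.TTheory GRing.Theory Num.Theory.
Local Open Scope ring_scope.

Section Counting.
Variable T : eqType.
Implicit Types (s : seq T) (P Q : pred T).

Lemma perm_map_in (f : T -> T) s : uniq s -> {in s &, injective f} ->
  {in s, forall x, f x \in s} -> perm_eq (map f s) s.
Proof.
move=> s_uniq f_inj f_s; have fs_uniq : uniq (map f s) by rewrite map_inj_in_uniq.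
have fs_sub : {subset map f s <= s} by move=> _ /mapP[x xs ->]; apply: f_s.
have [_ fs_s] := uniq_min_size fs_uniq fs_sub (eq_leq (esym (size_map f s))).
exact: uniq_perm.
Qed.

Lemma count_except2 P Q s a b : uniq s -> a \in s -> b \in s -> a != b ->
  {in s, forall c, c != a -> c != b -> P c = Q c} ->
  (count P s + Q a + Q b = count Q s + P a + P b)%N.
Proof.
move=> s_uniq sa sb ab PQ; have rb : b \in rem a s by rewrite mem_rem_uniq // inE eq_sym ab.
have /permP es := perm_trans (perm_to_rem sa) (etrans (perm_cons a _ _) (perm_to_rem rb)).
rewrite !es /= (@eq_in_count _ P Q) => [|c]; first by lia.
rewrite (mem_rem_uniq _ (rem_uniq _ s_uniq)) inE => /andP[cb].
by rewrite (mem_rem_uniq _ s_uniq) inE => /andP[ca /PQ]; apply.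
Qed.

Lemma count_lt_sub P Q s x : subpred P Q -> x \in s -> Q x -> ~~ P x ->
  (count P s < count Q s)%N.
Proof.
move=> PQ; elim: s => //= y s IH; rewrite inE => /orP[/eqP<- Qx /negPf->|xs Qx Px].
  by rewrite Qx add0n add1n ltnS sub_count.
by rewrite -addnS leq_add ?IH //; case Py: (P y); rewrite ?(PQ _ Py).
Qed.

Lemma count_predIC P Q s : (count (predI P Q) s + count (predI P (predC Q)) s = count P s)%N.
Proof.
rewrite -[RHS]size_filter -(count_predC Q) !count_filter.
by congr (_ + _)%N; apply: eq_count => x /=; rewrite andbC.
Qed.

End Counting.

Section Euclidean.
Variables (R : realType) (n : nat).
Local Notation dotv := (@dotv R n).
Implicit Types (a b u w : 'rV[R]_n) (M : 'M[R]_n).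

Lemma dotvC u w : dotv u w = dotv w u.
Proof. by rewrite /dotv -[u *m w^T]trmxK trmx_mul trmxK mxE. Qed.

Lemma dotvDl u w b : dotv (u + w) b = dotv u b + dotv w b.
Proof. by rewrite /dotv mulmxDl mxE. Qed.

Lemma dotvZl (c : R) u b : dotv (c *: u) b = c * dotv u b.
Proof. by rewrite /dotv -scalemxAl mxE. Qed.

Lemma dotvNl u b : dotv (- u) b = - dotv u b.
Proof. by rewrite -scaleN1r dotvZl mulN1r. Qed.

Lemma dotvBl u w b : dotv (u - w) b = dotv u b - dotv w b.
Proof. by rewrite dotvDl dotvNl. Qed.

Lemma dotvDr u w b : dotv b (u + w) = dotv b u + dotv b w.
Proof. by rewrite dotvC dotvDl !(dotvC b). Qed.

Lemma dotvZr (c : R) u b : dotv b (c *: u) = c * dotv b u.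
Proof. by rewrite dotvC dotvZl dotvC. Qed.

Lemma dotvNr u b : dotv b (- u) = - dotv b u.
Proof. by rewrite dotvC dotvNl dotvC. Qed.

Lemma dotvBr u w b : dotv b (u - w) = dotv b u - dotv b w.
Proof. by rewrite dotvDr dotvNr. Qed.

Lemma dotv0r b : dotv b 0 = 0.
Proof. by rewrite /dotv trmx0 mulmx0 mxE. Qed.

Lemma dotv_sumr (I : Type) (r : seq I) (P : pred I) (F : I -> 'rV[R]_n) b :
  dotv b (\sum_(i <- r | P i) F i) = \sum_(i <- r | P i) dotv b (F i).
Proof. by apply: (big_morph (dotv b)) => [u w|]; rewrite ?dotvDr ?dotv0r. Qed.

Lemma dotv_mulmx u w M : dotv (u *m M) w = dotv u (w *m M^T).
Proof. by rewrite /dotv trmx_mul trmxK mulmxA. Qed.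

Lemma dotvv_sqr a : dotv a a = \sum_j a 0 j ^+ 2.
Proof. by rewrite /dotv mxE; apply: eq_bigr => j _; rewrite mxE expr2. Qed.

Lemma dotvv_gt0 a : a != 0 -> 0 < dotv a a.
Proof.
move=> a0; rewrite lt_def dotvv_sqr sumr_ge0 ?andbT => [|j _]; last exact: sqr_ge0.
rewrite psumr_eq0 => [|j _]; last exact: sqr_ge0.
apply: contra a0 => /allP a_0; apply/eqP/matrixP => i j; rewrite (ord1 i) mxE.
by have /implyP/(_ isT) := a_0 j (mem_index_enum j); rewrite sqrf_eq0 => /eqP.
Qed.

Lemma dotv_orthogonal u w M : M *m M^T = 1%:M -> dotv (u *m M) (w *m M) = dotv u w.
Proof. by move=> MMT; rewrite dotv_mulmx -mulmxA MMT mulmx1. Qed.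

Lemma dotv_CS_lt a b : a != 0 -> (forall t : R, b != t *: a) ->
  dotv a b ^+ 2 < dotv a a * dotv b b.
Proof.
move=> a0 b_npar; have aa := dotvv_gt0 a0.
set t := dotv a b / dotv a a; have d0 : b - t *: a != 0.
  by apply: contra (b_npar t) => /eqP/subr0_eq->.
have dd : dotv (b - t *: a) (b - t *: a) = (dotv a a * dotv b b - dotv a b ^+ 2) / dotv a a.
  by rewrite dotvBl !dotvBr !dotvZl !dotvZr (dotvC b a) /t; field; lra.
by have := dotvv_gt0 d0; rewrite dd pmulr_lgt0 ?invr_gt0 // subr_gt0.
Qed.

End Euclidean.

Section Reflections.
Variables (R : realType) (n : nat).
Local Notation dotv := (@dotv R n).
Implicit Types (a b u : 'rV[R]_n) (M : 'M[R]_n).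

Definition cartan b a := 2 * dotv b a / dotv a a.

Lemma mul_refl u a : u *m refl a = u - cartan u a *: a.
Proof.
rewrite /refl mulmxBr mulmx1 -scalemxAr mulmxA [u *m a^T]mx11_scalar.
by rewrite mul_scalar_mx scalerA /cartan mulrAC.
Qed.

Lemma trmx_refl a : (refl a)^T = refl a.
Proof. by rewrite /refl linearB /= linearZ /= trmx_mul trmxK tr_scalar_mx. Qed.

Lemma cartan_id a : a != 0 -> cartan a a = 2.
Proof. by move=> /dotvv_gt0 aa; rewrite /cartan mulfK ?gt_eqF. Qed.

Lemma refl_root a : a != 0 -> a *m refl a = - a.
Proof. by move=> a0; rewrite mul_refl cartan_id // scaler_nat mulr2n opprD addNKr. Qed.

Lemma reflK a : a != 0 -> refl a *m refl a = 1%:M.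
Proof.
move=> a0; apply/row_matrixP => i; rewrite !rowE mulmxA mulmx1.
move: (delta_mx 0 i) => u; rewrite !mul_refl; have aa := dotvv_gt0 a0.
have -> : cartan (u - cartan u a *: a) a = - cartan u a.
  by rewrite /cartan dotvBl dotvZl /cartan; field; lra.
by rewrite scaleNr opprK subrK.
Qed.

Lemma reflN a : refl (- a) = refl a.
Proof. by rewrite /refl [(- a)^T]linearN /= mulNmx mulmxN opprK dotvNl dotvNr opprK. Qed.

Lemma refl_conj a M : M *m M^T = 1%:M -> M^T *m M = 1%:M ->
  refl (a *m M) = M^T *m refl a *m M.
Proof.
move=> MMT MTM; rewrite /refl dotv_orthogonal // mulmxBr mulmx1 mulmxBl MTM.
by rewrite -scalemxAr -scalemxAl trmx_mul !mulmxA.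
Qed.

End Reflections.

Section WeylGroup.
Variables (R : realType) (n : nat) (Phi : seq 'rV[R]_n) (v : 'rV[R]_n).
Hypothesis Phi_root_system : is_root_system Phi.
Hypothesis v_regular : regular Phi v.
Local Notation dotv := (@dotv R n).
Local Notation len := (len Phi v).
Local Notation inW := (inW Phi).
Implicit Types (a b c : 'rV[R]_n) (u w x y z : 'M[R]_n) (s : seq 'rV[R]_n).

Definition pos a := 0 < dotv v a.
Definition npos := count pos Phi.
Definition refl_prod s := foldr (fun a m => refl a *m m) 1%:M s.

Lemma uniq_roots : uniq Phi. Proof. by case: Phi_root_system. Qed.

Lemma root_neq0 a : a \in Phi -> a != 0.
Proof. by case: Phi_root_system => _ Phi0 _ _ _; apply: contraTneq => ->. Qed.

Lemma root_refl a b : a \in Phi -> b \in Phi -> b *m refl a \in Phi.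
Proof. by case: Phi_root_system => _ _ + _ _; apply. Qed.

Lemma rootN a : a \in Phi -> - a \in Phi.
Proof. by move=> aPhi; rewrite -refl_root ?root_neq0 ?root_refl. Qed.

Lemma cartan_int a b : a \in Phi -> b \in Phi -> exists k : int, cartan b a = k%:~R.
Proof. by case: Phi_root_system => _ _ _ + _; apply. Qed.

Lemma root_reduced a (t : R) : a \in Phi -> t *: a \in Phi -> t = 1 \/ t = -1.
Proof. by case: Phi_root_system => _ _ _ _; apply. Qed.

Lemma posN a : pos (- a) = (dotv v a < 0).
Proof. by rewrite /pos dotvNr oppr_gt0. Qed.

Lemma root_neg a : a \in Phi -> (dotv v a < 0) = ~~ pos a.
Proof. by move=> /v_regular va0; rewrite /pos -leNgt le_eqVlt (negPf va0). Qed.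

Lemma posN_root a : a \in Phi -> pos (- a) = ~~ pos a.
Proof. by move=> aPhi; rewrite posN root_neg. Qed.

Lemma refl_prod_cat s1 s2 : refl_prod (s1 ++ s2) = refl_prod s1 *m refl_prod s2.
Proof. by elim: s1 => [|a s IH] /=; rewrite ?mul1mx // IH mulmxA. Qed.

Lemma inW1 : inW 1%:M. Proof. by exists [::]. Qed.

Lemma inW_refl a : a \in Phi -> inW (refl a).
Proof. by move=> aPhi; exists [:: a]; rewrite /= aPhi mulmx1. Qed.

Lemma inW_mul w z : inW w -> inW z -> inW (w *m z).
Proof.
move=> [s1 [s1Phi ->]] [s2 [s2Phi ->]]; exists (s1 ++ s2).
by rewrite all_cat s1Phi s2Phi; split; last by have := refl_prod_cat s1 s2.
Qed.

Lemma inW_ind (P : 'M[R]_n -> Prop) : P 1%:M ->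
  (forall a w, a \in Phi -> inW w -> P w -> P (refl a *m w)) ->
  forall w, inW w -> P w.
Proof.
move=> P1 Prefl w [s [+ ->]]; elim: s => //= a s IH /andP[aPhi sPhi].
by apply: Prefl (IH sPhi) => //; exists s.
Qed.

Lemma W_orthogonal w : inW w -> w *m w^T = 1%:M /\ w^T *m w = 1%:M.
Proof.
move: w; apply: inW_ind => [|a w aPhi _ [wwT wTw]]; first by rewrite trmx1 mulmx1.
have aa := reflK (root_neq0 aPhi).
by rewrite trmx_mul trmx_refl !mulmxA -(mulmxA _ w) wwT mulmx1 -(mulmxA w^T) !aa mulmx1.
Qed.

Lemma W_mulmx_tr w : inW w -> w *m w^T = 1%:M.
Proof. by case/W_orthogonal. Qed.

Lemma W_tr_mulmx w : inW w -> w^T *m w = 1%:M.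
Proof. by case/W_orthogonal. Qed.

Lemma W_tr w : inW w -> inW w^T.
Proof.
move: w; apply: inW_ind => [|a w aPhi _ wT]; first by rewrite trmx1; apply: inW1.
by rewrite trmx_mul trmx_refl; apply: inW_mul wT (inW_refl aPhi).
Qed.

Lemma invmx_W w : inW w -> invmx w = w^T.
Proof.
move=> Ww; have [wU _] := mulmx1_unit (W_mulmx_tr Ww).
by rewrite -[invmx w]mulmx1 -(W_mulmx_tr Ww) mulmxA mulVmx ?mul1mx.
Qed.

Lemma W_root w a : inW w -> a \in Phi -> a *m w \in Phi.
Proof.
move=> Ww; move: w Ww a.
apply: (@inW_ind (fun w => forall a, a \in Phi -> a *m w \in Phi)) => [a|b w bPhi _ IH a] aPhi.
  by rewrite mulmx1.
by rewrite mulmxA IH ?root_refl.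
Qed.

Lemma W_mulIr w : inW w -> injective (mulmx^~ w : 'rV[R]_n -> 'rV[R]_n).
Proof.
by move=> Ww a b /(congr1 (mulmx^~ w^T)); rewrite -!mulmxA W_mulmx_tr ?mulmx1.
Qed.

Lemma lenE w : inW w -> len w = count (fun a => pos a && ~~ pos (a *m w)) Phi.
Proof. by move=> Ww; apply: eq_in_count => a aPhi /=; rewrite root_neg ?W_root. Qed.

Lemma count_root_map (f : 'rV[R]_n -> 'rV[R]_n) (P : pred 'rV[R]_n) :
  {in Phi &, injective f} -> {in Phi, forall a, f a \in Phi} ->
  count (fun a => P (f a)) Phi = count P Phi.
Proof.
by move=> f_inj f_Phi; rewrite -count_map; apply/permP/perm_map_in/f_Phi/f_inj/uniq_roots.
Qed.

Lemma len_tr w : inW w -> len w^T = len w.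
Proof.
move=> Ww; rewrite (lenE (W_tr Ww)) (lenE Ww).
rewrite -(@count_root_map (fun b => - (b *m w))) => [|a b _ _|a aPhi].
- apply: eq_in_count => b bPhi /=.
  by rewrite mulNmx -mulmxA W_mulmx_tr // mulmx1 !posN_root ?W_root // negbK andbC.
- by move/oppr_inj/(W_mulIr Ww).
- by rewrite rootN ?W_root.
Qed.

Lemma len1 : len 1%:M = 0%N.
Proof.
by rewrite (lenE inW1) (eq_count (a2 := pred0)) ?count_pred0 // => a; rewrite mulmx1 andbN.
Qed.

Lemma len_le w : (len w <= npos)%N.
Proof. by apply: sub_count => a /andP[]. Qed.

(** * Simple roots *)

(* The Cartan integers of two non-proportional roots have product < 4 by the strict
   Cauchy-Schwarz inequality, so one of them is 1. *)
Lemma root_sub a b : a \in Phi -> b \in Phi -> b != a -> b != - a ->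
  0 < dotv a b -> a - b \in Phi.
Proof.
move=> aPhi bPhi ba bNa ab_gt0.
have aa := dotvv_gt0 (root_neq0 aPhi); have bb := dotvv_gt0 (root_neq0 bPhi).
have b_npar t : b != t *: a.
  apply/eqP => bE; have /(root_reduced aPhi)[t1|tN1] : t *: a \in Phi by rewrite -bE.
  - by rewrite bE t1 scale1r eqxx in ba.
  - by rewrite bE tN1 scaleN1r eqxx in bNa.
have [k1 k1E] := cartan_int aPhi bPhi; have [k2 k2E] := cartan_int bPhi aPhi.
have k1_gt0 : (0 < k1)%R by rewrite -(ltr0z R) -k1E /cartan dotvC divr_gt0 ?mulr_gt0.
have k2_gt0 : (0 < k2)%R by rewrite -(ltr0z R) -k2E /cartan divr_gt0 ?mulr_gt0.
have k12_lt4 : (k1 * k2 < 4)%R.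
  rewrite -(ltr_int R) intrM -k1E -k2E /cartan dotvC -subr_gt0.
  have -> : 4%:~R - 2 * dotv a b / dotv a a * (2 * dotv a b / dotv b b)
      = 4 * (dotv a a * dotv b b - dotv a b ^+ 2) / (dotv a a * dotv b b).
    by field; rewrite !gt_eqF.
  by rewrite divr_gt0 ?mulr_gt0 // subr_gt0 dotv_CS_lt ?root_neq0.
have [k1_1|k2_1] : k1 = 1 \/ k2 = 1 by nia.
  by rewrite -opprB rootN // -[a]scale1r -[1]/(1%:~R) -k1_1 -k1E -mul_refl root_refl.
by rewrite -[b]scale1r -[1]/(1%:~R) -k2_1 -k2E -mul_refl root_refl.
Qed.

Definition decomposable a :=
  has (fun b => has (fun c => [&& pos b, pos c & a == b + c]) Phi) Phi.
Definition simple_root a := [&& a \in Phi, pos a & ~~ decomposable a].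

Lemma simple_root_root a : simple_root a -> a \in Phi. Proof. by case/and3P. Qed.
Lemma simple_root_pos a : simple_root a -> pos a. Proof. by case/and3P. Qed.

Lemma simple_root_indecomposable a b c : simple_root a -> b \in Phi -> c \in Phi ->
  pos b -> pos c -> a != b + c.
Proof.
case/and3P=> _ _ /hasPn a_indec bPhi cPhi pb pc; apply/eqP=> aE.
by have /hasPn/(_ c cPhi) := a_indec b bPhi; rewrite pb pc aE eqxx.
Qed.

Lemma pos_neqN a b : pos a -> pos b -> b != - a.
Proof. by move=> pa pb; apply: contraTneq pb => ->; rewrite posN -leNgt ltW. Qed.

Lemma simple_root_dotv_le0 a g : simple_root a -> simple_root g -> g != a ->
  dotv a g <= 0.
Proof.
move=> sa sg ga; have [aPhi pa] := (simple_root_root sa, simple_root_pos sa).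
have [gPhi pg] := (simple_root_root sg, simple_root_pos sg).
rewrite leNgt; apply/negP => /(root_sub aPhi gPhi ga (pos_neqN pa pg)) agPhi.
have [pag|] := boolP (pos (a - g)).
  by move: (simple_root_indecomposable sa agPhi gPhi pag pg); rewrite subrK eqxx.
rewrite -posN_root // opprB => pga; have gaPhi : g - a \in Phi by rewrite -opprB rootN.
by move: (simple_root_indecomposable sg gaPhi aPhi pga pa); rewrite subrK eqxx.
Qed.

(* An induction measure replacing the usual height, which presupposes that the simple
   roots form a basis. *)
Definition height b := count (fun c => pos c && (dotv v c < dotv v b)) Phi.

Lemma height_lt b c : c \in Phi -> pos c -> dotv v c < dotv v b -> (height c < height b)%N.
Proof.
move=> cPhi pc cb; apply: (count_lt_sub (x := c)) => //; last by rewrite ltxx andbF.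
  by move=> x /andP[-> /lt_trans]; apply.
by rewrite pc cb.
Qed.

Lemma pos_root_simple_sum b : b \in Phi -> pos b ->
  exists2 l, all simple_root l & b = \sum_(g <- l) g.
Proof.
elim: {b}(height b).+1 {-2}b (ltnSn (height b)) => // m IH b hb bPhi pb.
have [sb|] := boolP (simple_root b); first by exists [:: b]; rewrite /= ?sb ?big_seq1.
rewrite /simple_root bPhi pb negbK => /hasP[c cPhi /hasP[d dPhi /and3P[pc pd /eqP bE]]].
have hc : (height c < m)%N.
  by apply: leq_trans (height_lt cPhi pc _) hb; rewrite bE dotvDr ltrDl.
have hd : (height d < m)%N.
  by apply: leq_trans (height_lt dPhi pd _) hb; rewrite bE dotvDr ltrDr.
have [[lc lcS cE] [ld ldS dE]] := (IH c hc cPhi pc, IH d hd dPhi pd).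
by exists (lc ++ ld); rewrite ?all_cat ?lcS ?ldS // big_cat -cE -dE.
Qed.

(* A nonzero combination of simple roots other than a cannot be a multiple of a:
   it pairs nonpositively with a but positively with v. *)
Lemma simple_sum_colinear a l (t : R) : simple_root a -> all simple_root l ->
  \sum_(g <- l) g = t *: a -> all (pred1 a) l.
Proof.
move=> sa lS lE; have [aPhi pa] := (simple_root_root sa, simple_root_pos sa).
have gS g : g \in l -> simple_root g by move/(allP lS).
set u := \sum_(g <- l | g != a) g.
have [k uE] : exists k : R, u = k *: a.
  have aSum : \sum_(g <- l | g == a) g = a *+ count (pred1 a) l.
    by rewrite (eq_bigr (fun=> a)) => [|g /eqP//]; rewrite big_const_seq iter_addr_0.
  exists (t - (count (pred1 a) l)%:R); rewrite /u; move: lE.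
  rewrite (bigID (pred1 a)) /= aSum => /(canRL (addKr _)) ->.
  by rewrite scalerBl scaler_nat addrC.
have au_le0 : dotv a u <= 0.
  rewrite dotv_sumr big_seq_cond sumr_le0 // => g /andP[/gS sg ga].
  exact: simple_root_dotv_le0.
have vu_ge0 : 0 <= dotv v u.
  rewrite dotv_sumr big_seq_cond sumr_ge0 // => g /andP[/gS sg _].
  exact/ltW/simple_root_pos.
have u0 : u = 0.
  move: au_le0 vu_ge0 pa; rewrite /pos uE !dotvZr => ak_le0 vk_ge0 va_gt0.
  have aa := dotvv_gt0 (root_neq0 aPhi).
  suff -> : k = 0 by rewrite scale0r.
  by apply/eqP; rewrite eq_le -(pmulr_lle0 _ aa) -(pmulr_lge0 _ va_gt0) ak_le0.
have /eqP := dotv0r v; rewrite -u0 dotv_sumr big_seq_cond psumr_eq0.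
  move=> /allP l_a; apply/allP => g gl; apply: contraTT (l_a g gl) => /= ga.
  by rewrite gl ga /= gt_eqF //; apply/simple_root_pos/gS.
by move=> g /andP[/gS sg _]; apply/ltW/simple_root_pos.
Qed.

(* Otherwise b and -(b s_a) are sums of simple roots adding up to a multiple of a. *)
Lemma refl_simple_pos a b : simple_root a -> b \in Phi -> pos b -> b != a ->
  pos (b *m refl a).
Proof.
move=> sa bPhi pb; have [aPhi pa] := (simple_root_root sa, simple_root_pos sa).
have b'Phi := root_refl aPhi bPhi; apply: contraNT => nb'.
have [l1 l1S bE] := pos_root_simple_sum bPhi pb.
have [l2 l2S b'E] : exists2 l2, all simple_root l2 & - (b *m refl a) = \sum_(g <- l2) g.
  by apply: pos_root_simple_sum; rewrite ?rootN ?posN_root.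
have : all (pred1 a) (l1 ++ l2).
  apply: (simple_sum_colinear (t := cartan b a)) sa _ _; first by rewrite all_cat l1S l2S.
  by rewrite big_cat /= -bE -b'E mul_refl opprB addrC subrK.
rewrite all_cat => /andP[/all_pred1P l1E _].
have bE' : b = (size l1)%:R *: a by rewrite bE {1}l1E big_nseq iter_addr_0 scaler_nat.
have /(root_reduced aPhi)[l1_1|l1_N1] : (size l1)%:R *: a \in Phi by rewrite -bE'.
  by rewrite bE' l1_1 scale1r.
by have := pos_neqN pa pb; rewrite bE' l1_N1 scaleN1r eqxx.
Qed.

Lemma pos_refl_simple a c : simple_root a -> c \in Phi -> c != a -> c != - a ->
  pos (c *m refl a) = pos c.
Proof.
move=> sa cPhi ca cNa; have [pc|npc] := boolP (pos c); first exact: refl_simple_pos.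
apply: negbTE; rewrite -posN_root ?(root_refl (simple_root_root sa)) // -mulNmx.
by apply: refl_simple_pos; rewrite ?rootN ?posN_root // eqr_oppLR.
Qed.

Lemma exists_simple_dotv_gt0 b : b \in Phi -> pos b ->
  exists2 a, simple_root a & 0 < dotv b a.
Proof.
move=> bPhi pb; have [l lS bE] := pos_root_simple_sum bPhi pb.
have /hasP[a al ba] : has (fun a => 0 < dotv b a) l.
  apply: contraTT (dotvv_gt0 (root_neq0 bPhi)) => /hasPn l_le0.
  rewrite -leNgt {2}bE dotv_sumr big_seq sumr_le0 // => a /l_le0.
  by rewrite -leNgt.
by exists a => //; apply: (allP lS).
Qed.

(* Induction on height: for a simple root a with (b, a) > 0, b s_a is lower and
   s_b = s_a s_(b s_a) s_a. *)
Lemma refl_simple_word b : b \in Phi ->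
  exists2 s, all simple_root s & refl b = refl_prod s.
Proof.
move=> bPhi; wlog pb : b bPhi / pos b => [refl_pos|].
  have [|nb] := boolP (pos b); first exact: refl_pos.
  by rewrite -reflN; apply: refl_pos; rewrite ?rootN ?posN_root.
elim: {b}(height b).+1 {-2}b (ltnSn (height b)) bPhi pb => // m IH b hb bPhi pb.
have [a sa ba] := exists_simple_dotv_gt0 bPhi pb.
have [aPhi pa] := (simple_root_root sa, simple_root_pos sa).
have [-> | b_neq_a] := eqVneq b a; first by exists [:: a]; rewrite /= ?sa ?mulmx1.
set b' := b *m refl a; have b'Phi : b' \in Phi by apply: root_refl.
have pb' : pos b' by apply: refl_simple_pos.
have hb' : (height b' < m)%N.
  apply: leq_trans (height_lt b'Phi pb' _) hb; rewrite /b' mul_refl dotvBr dotvZr gtrBl.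
  by rewrite mulr_gt0 // /cartan divr_gt0 ?mulr_gt0 ?dotvv_gt0 ?root_neq0.
have [s sS b'E] := IH b' hb' b'Phi pb'.
have [aaT aTa] : refl a *m (refl a)^T = 1%:M /\ (refl a)^T *m refl a = 1%:M.
  by rewrite trmx_refl reflK ?root_neq0.
exists (a :: s ++ [:: a]); first by rewrite /= sa all_cat sS /= sa.
have -> : b = b' *m refl a by rewrite /b' -mulmxA reflK ?root_neq0 ?mulmx1.
by rewrite refl_conj // trmx_refl b'E /= refl_prod_cat /= mulmx1 mulmxA.
Qed.

Lemma W_simple_word w : inW w -> exists2 s, all simple_root s & w = refl_prod s.
Proof.
move: w; apply: inW_ind => [|b w bPhi _ [s sS ->]]; first by exists [::].
have [t tS ->] := refl_simple_word bPhi.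
by exists (t ++ s); rewrite ?all_cat ?tS ?sS ?refl_prod_cat.
Qed.

(** * Reduced words *)

Lemma inW_refl_prod s : all simple_root s -> inW (refl_prod s).
Proof. by move=> sS; exists s; split=> //; apply: sub_all sS => a /simple_root_root. Qed.

(* s_a permutes the positive roots other than a, so only the inversions at +-a change. *)
Lemma len_refl_simple a w : simple_root a -> inW w ->
  (len (refl a *m w) + ~~ pos (a *m w) = len w + pos (a *m w))%N.
Proof.
move=> sa Ww; have [aPhi pa] := (simple_root_root sa, simple_root_pos sa).
have [a0 awPhi] := (root_neq0 aPhi, W_root Ww aPhi).
rewrite (lenE (inW_mul (inW_refl aPhi) Ww)) (lenE Ww).
rewrite -(@count_root_map (mulmx^~ (refl a))) => [|b c _ _|b]; last first.
- exact: root_refl.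
- by move/(W_mulIr (inW_refl aPhi)).
set Q := fun b => pos (b *m refl a) && ~~ pos (b *m w).
rewrite (eq_count (a2 := Q)) => [|b]; last by rewrite /= mulmxA -(mulmxA b) reflK ?mulmx1.
have QL : {in Phi, forall c, c != a -> c != - a -> Q c = pos c && ~~ pos (c *m w)}.
  by move=> c cPhi ca cNa; rewrite /Q pos_refl_simple.
have := @count_except2 _ Q _ _ _ _ uniq_roots aPhi (rootN aPhi) (pos_neqN pa pa) QL.
by rewrite /Q !mulNmx refl_root // opprK !posN_root // pa negbK /= !addn0.
Qed.

Lemma len_refl_simple_pos a w : simple_root a -> inW w -> pos (a *m w) ->
  len (refl a *m w) = (len w).+1.
Proof. by move=> sa Ww paw; have := len_refl_simple sa Ww; rewrite paw /=; lia. Qed.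

Lemma len_refl_simple_le a w : simple_root a -> inW w -> (len (refl a *m w) <= (len w).+1)%N.
Proof.
by move=> sa Ww; have := len_refl_simple sa Ww; case: (pos (a *m w)) => /=; lia.
Qed.

Lemma len_refl_prod_le s : all simple_root s -> (len (refl_prod s) <= size s)%N.
Proof.
elim: s => [|a s IH] /=; first by rewrite len1.
case/andP=> sa sS; apply: leq_trans (len_refl_simple_le sa (inW_refl_prod sS)) _.
by rewrite ltnS IH.
Qed.

Lemma refl_prod_split g s : all simple_root s -> g \in Phi -> pos g ->
  ~~ pos (g *m refl_prod s) ->
  exists s1 b s2, s = s1 ++ b :: s2 /\ g *m refl_prod s1 = b.
Proof.
elim: s g => [|b s IH] g /=; first by move=> _ _ pg; rewrite mulmx1 pg.
case/andP=> sb sS gPhi pg; have [-> _|gb] := eqVneq g b.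
  by exists [::], b, s; rewrite /= mulmx1.
rewrite mulmxA => /(IH _ sS (root_refl (simple_root_root sb) gPhi)).
case=> [|s1 [c [s2 [-> cE]]]]; first exact: refl_simple_pos.
by exists (b :: s1), c, s2; rewrite /= mulmxA.
Qed.

Lemma refl_prod_delete a s : simple_root a -> all simple_root s ->
  ~~ pos (a *m refl_prod s) ->
  exists2 s', all simple_root s' &
    (size s').+1 = size s /\ refl a *m refl_prod s = refl_prod s'.
Proof.
move=> sa sS /(refl_prod_split sS (simple_root_root sa) (simple_root_pos sa)).
case=> s1 [b [s2 [sE bE]]]; move: sS; rewrite sE all_cat /= => /and3P[s1S sb s2S].
exists (s1 ++ s2); first by rewrite all_cat s1S s2S.
split; first by rewrite !size_cat addnS.
have W1 := inW_refl_prod s1S.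
have sbE : refl b = (refl_prod s1)^T *m refl a *m refl_prod s1.
  by rewrite -bE refl_conj ?W_mulmx_tr ?W_tr_mulmx.
rewrite !refl_prod_cat /= sbE !mulmxA -(mulmxA (refl a)) W_mulmx_tr // mulmx1.
by rewrite reflK ?root_neq0 ?simple_root_root // mul1mx.
Qed.

Lemma refl_prod_shorten s : all simple_root s -> (len (refl_prod s) < size s)%N ->
  exists2 s', all simple_root s' & (size s' < size s)%N /\ refl_prod s' = refl_prod s.
Proof.
elim: s => [|a s IH] //= /andP[sa sS] len_lt.
have [/(IH sS)[s' s'S [s's <-]]|len_ge] := ltnP (len (refl_prod s)) (size s).
  by exists (a :: s'); rewrite /= ?sa.
have a_neg : ~~ pos (a *m refl_prod s).
  apply: contraTN len_lt => /(len_refl_simple_pos sa (inW_refl_prod sS)) ->.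
  by rewrite ltnS -leqNgt.
have [s' s'S [s's ->]] := refl_prod_delete sa sS a_neg.
by exists s'; rewrite // -s's.
Qed.

Lemma W_reduced_word w : inW w ->
  exists2 s, all simple_root s & size s = len w /\ w = refl_prod s.
Proof.
case/W_simple_word=> s + ->.
elim: {s}(size s).+1 {-2}s (ltnSn (size s)) => // m IH s hs sS.
have := len_refl_prod_le sS; rewrite leq_eqVlt => /orP[/eqP->|len_lt]; first by exists s.
have [s' s'S [s's <-]] := refl_prod_shorten sS len_lt.
exact: IH (leq_trans s's hs) s'S.
Qed.

Lemma len_eq0 w : inW w -> len w = 0%N -> w = 1%:M.
Proof. by move=> /W_reduced_word[[|a s] _ [//= <- ->]]. Qed.

(** * The longest element *)

Section LongestElement.
Variable w0 : 'M[R]_n.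
Hypothesis w0_longest : is_longest Phi v w0.

Let W_w0 : inW w0. Proof. by case: w0_longest. Qed.

Lemma len_longest : len w0 = npos.
Proof.
case: w0_longest => _ w0_max; apply/eqP; rewrite eqn_leq len_le leqNgt; apply/negP => len_lt.
have /hasP[b bPhi /andP[pb pbw]] : has (fun b => pos b && pos (b *m w0)) Phi.
  apply: contraTT len_lt => /hasPn not_both; rewrite -leqNgt (lenE W_w0).
  by rewrite (@eq_in_count _ _ pos) // => b /not_both; case: (pos b).
have [l lS bE] := pos_root_simple_sum bPhi pb.
have /hasP[a al paw] : has (fun a => pos (a *m w0)) l.
  apply: contraTT pbw => /hasPn l_npos; rewrite /pos -leNgt bE mulmx_suml dotv_sumr.
  by rewrite big_seq sumr_le0 // => a /l_npos; rewrite leNgt.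
have sa : simple_root a by apply: (allP lS).
have := w0_max _ (inW_mul (inW_refl (simple_root_root sa)) W_w0).
by rewrite len_refl_simple_pos // ltnn.
Qed.

Lemma longest_inverts : {in Phi, forall c, pos (c *m w0) = ~~ pos c}.
Proof.
have pos_inv c : c \in Phi -> pos c -> ~~ pos (c *m w0).
  move=> cPhi pc; have := len_longest; rewrite (lenE W_w0) => /eqP; apply: contraTN => pcw.
  by rewrite neq_ltn (count_lt_sub (x := c)) // ?pc ?pcw // => b /andP[].
move=> c cPhi; have [pc|npc] := boolP (pos c); first exact/negbTE/pos_inv.
have := pos_inv _ (rootN cPhi); rewrite mulNmx !posN_root ?W_root // negbK.
by move=> ->.
Qed.

Lemma len_mul_longest w : inW w -> len (w *m w0) = (npos - len w)%N.
Proof.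
move=> Ww; rewrite (lenE (inW_mul Ww W_w0)) (lenE Ww) /npos.
rewrite -(count_predIC pos (fun c => pos (c *m w))) addnK.
by apply: eq_in_count => c cPhi /=; rewrite mulmxA longest_inverts ?W_root // negbK.
Qed.

Lemma longest_involutive : w0 *m w0 = 1%:M.
Proof.
by apply: len_eq0 (inW_mul W_w0 W_w0) _; rewrite len_mul_longest // len_longest subnn.
Qed.

Lemma trmx_longest : w0^T = w0.
Proof. by rewrite -[w0^T]mulmx1 -longest_involutive mulmxA W_tr_mulmx // mul1mx. Qed.

Lemma longest_unique w : inW w -> len w = npos -> w = w0.
Proof.
move=> Ww lw; have ww0 : w *m w0 = 1%:M.
  by apply: len_eq0 (inW_mul Ww W_w0) _; rewrite len_mul_longest // lw subnn.
by rewrite -[w]mulmx1 -longest_involutive mulmxA ww0 mul1mx.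
Qed.

Lemma len_conj_longest w : inW w -> len (w0 *m w *m w0) = len w.
Proof.
move=> Ww; have Ww0w := inW_mul W_w0 Ww.
rewrite len_mul_longest // -(len_tr Ww0w) trmx_mul trmx_longest.
by rewrite (len_mul_longest (W_tr Ww)) (len_tr Ww) subKn ?len_le.
Qed.

End LongestElement.

(** * Splittings *)

Lemma leL_len u w : leL Phi v u w -> (len u <= len w)%N.
Proof. by case=> _ [_ [z [_ [_ ->]]]]; rewrite leq_addl. Qed.

Lemma leR_len u w : leR Phi v u w -> (len u <= len w)%N.
Proof. by case=> _ [_ [z [_ [_ ->]]]]; rewrite leq_addr. Qed.

Lemma leL_len_mul_tr u w : leL Phi v u w -> len (u *m w^T) = (len w - len u)%N.
Proof.
case=> Wu [_ [z [Wz [-> ->]]]].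
by rewrite trmx_mul mulmxA W_mulmx_tr // mul1mx len_tr // addnK.
Qed.

Section SplittingDuality.
Variables (w0 x0 y0 : 'M[R]_n) (X Y : 'M[R]_n -> Prop).
Hypotheses (w0_longest : is_longest Phi v w0) (XY_splitting : splitting Phi v X Y).
Hypotheses (x0_max : maxL Phi v X x0) (y0_max : maxR Phi v Y y0).

Let W_w0 : inW w0. Proof. by case: w0_longest. Qed.
Let W_X x : X x -> inW x. Proof. by case: XY_splitting => + _ _ _ _; apply. Qed.
Let W_Y y : Y y -> inW y. Proof. by case: XY_splitting => _ + _ _ _; apply. Qed.
Let len_XY x y : X x -> Y y -> len (x *m y) = (len x + len y)%N.
Proof. by case: XY_splitting => _ _ _ _; apply. Qed.
Let W_x0 : inW x0. Proof. by apply: W_X; case: x0_max. Qed.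

Lemma len_XY_le x y : X x -> Y y -> (len x + len y <= npos)%N.
Proof. by move=> Xx Yy; rewrite -len_XY ?len_le. Qed.

Lemma splitting_unit : X 1%:M /\ Y 1%:M.
Proof.
case: XY_splitting => _ _ /(_ _ inW1)[x [y [Xx Yy xyE]]] _ _.
have /eqP : (len x + len y = 0)%N by rewrite -len_XY // -xyE len1.
rewrite addn_eq0 => /andP[/eqP/(len_eq0 (W_X Xx)) x1 /eqP/(len_eq0 (W_Y Yy)) y1].
by split; [rewrite -x1 | rewrite -y1].
Qed.

Lemma splitting_max_mul : x0 *m y0 = w0.
Proof.
case: (x0_max) (y0_max) => [Xx0 x0_ge] [Yy0 y0_ge].
case: XY_splitting => _ _ /(_ _ W_w0)[x [y [Xx Yy xyE]]] _ _.
apply: (longest_unique w0_longest (inW_mul W_x0 (W_Y Yy0))).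
apply/eqP; rewrite eqn_leq len_le len_XY // -(len_longest w0_longest) xyE len_XY //.
by apply: leq_add; [apply/leL_len/x0_ge | apply/leR_len/y0_ge].
Qed.

Definition shiftX (u : 'M[R]_n) : Prop := exists x, X x /\ u = x *m invmx x0.
Definition shiftY (u : 'M[R]_n) : Prop := exists y, Y y /\ u = x0 *m y *m w0.

Lemma shift_mul x y : x *m x0^T *m (x0 *m y *m w0) = x *m y *m w0.
Proof. by rewrite !mulmxA -(mulmxA x) W_tr_mulmx // mulmx1. Qed.

Lemma splitting_shift : splitting Phi v shiftX shiftY.
Proof.
case: XY_splitting => _ _ XY_cover XY_uniq _; rewrite /shiftX (invmx_W W_x0).
split.
- by move=> _ [x [Xx ->]]; apply: inW_mul (W_X Xx) (W_tr W_x0).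
- by move=> _ [y [Yy ->]]; apply: inW_mul (inW_mul W_x0 (W_Y Yy)) W_w0.
- move=> w Ww; have [x [y [Xx Yy xyE]]] := XY_cover _ (inW_mul Ww W_w0).
  exists (x *m x0^T), (x0 *m y *m w0); split; [by exists x | by exists y|].
  by rewrite shift_mul -xyE -mulmxA (longest_involutive w0_longest) mulmx1.
- move=> _ _ _ _ [x [Xx ->]] [y [Yy ->]] [x' [Xx' ->]] [y' [Yy' ->]].
  rewrite !shift_mul => /(congr1 (mulmx^~ w0)).
  rewrite -!mulmxA (longest_involutive w0_longest).
  by rewrite !mulmx1 => /(XY_uniq _ _ _ _ Xx Yy Xx' Yy')[-> ->].
- move=> _ _ [x [Xx ->]] [y [Yy ->]]; have x_le := leL_len (x0_max.2 _ Xx).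
  have [Wxy Wx0y] := (inW_mul (W_X Xx) (W_Y Yy), inW_mul W_x0 (W_Y Yy)).
  rewrite shift_mul !(len_mul_longest w0_longest) // (leL_len_mul_tr (x0_max.2 _ Xx)).
  rewrite (len_XY Xx Yy) (len_XY x0_max.1 Yy).
  by have := len_XY_le x0_max.1 Yy; lia.
Qed.

Lemma maxL_shift : maxL Phi v shiftX (invmx x0).
Proof.
rewrite /shiftX (invmx_W W_x0); split.
  by exists 1%:M; rewrite mul1mx; split=> //; case: splitting_unit.
move=> _ [x [Xx ->]]; have Wx := W_X Xx; have x_le := x0_max.2 _ Xx.
split; first exact: inW_mul (W_tr W_x0).
split; first exact: W_tr.
exists x^T; split; first exact: W_tr.
rewrite mulmxA W_tr_mulmx // mul1mx; split=> //.
by rewrite (leL_len_mul_tr x_le) (len_tr W_x0) (len_tr Wx) subnKC ?(leL_len x_le).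
Qed.

Lemma maxR_shift : maxR Phi v shiftY (x0 *m w0).
Proof.
split; first by exists 1%:M; rewrite mulmx1; split=> //; case: splitting_unit.
move=> _ [y [Yy ->]]; have Wy := W_Y Yy; have Wx0y := inW_mul W_x0 Wy.
split; first exact: inW_mul.
split; first exact: inW_mul.
exists (w0 *m y^T *m w0); split; first exact: inW_mul (inW_mul W_w0 (W_tr Wy)) W_w0.
split.
  have -> : x0 *m y *m w0 *m (w0 *m y^T *m w0) = x0 *m (y *m (w0 *m w0) *m y^T) *m w0.
    by rewrite !mulmxA.
  by rewrite (longest_involutive w0_longest) mulmx1 W_mulmx_tr // mulmx1.
rewrite (len_conj_longest w0_longest (W_tr Wy)) (len_tr Wy).
rewrite !(len_mul_longest w0_longest) // (len_XY x0_max.1 Yy).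
by have := len_XY_le x0_max.1 Yy; lia.
Qed.

Lemma max_mul_longest : x0 *m w0 = w0 *m invmx y0 *m w0.
Proof.
have Wy0 : inW y0 by apply: W_Y; case: y0_max.
by rewrite (invmx_W Wy0) -splitting_max_mul -(mulmxA x0) W_mulmx_tr // mulmx1.
Qed.

End SplittingDuality.

End WeylGroup.

Theorem proposition6p2 (R : realType) (n : nat) (Phi : seq 'rV[R]_n)
  (v : 'rV[R]_n) (w0 x0 y0 : 'M[R]_n) (X Y : 'M[R]_n -> Prop) :
  is_root_system Phi -> regular Phi v -> is_longest Phi v w0 ->
  splitting Phi v X Y -> maxL Phi v X x0 -> maxR Phi v Y y0 ->
  let X' := fun u => exists x, X x /\ u = x *m invmx x0 in
  let Y' := fun u => exists y, Y y /\ u = x0 *m y *m w0 in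
  [/\ splitting Phi v X' Y',
      maxL Phi v X' (invmx x0),
      maxR Phi v Y' (x0 *m w0) &
      x0 *m w0 = w0 *m invmx y0 *m w0].
Proof.
move=> Phi_rs v_reg w0_longest XY_splitting x0_max y0_max X' Y'; split.
- exact (splitting_shift Phi_rs v_reg w0_longest XY_splitting x0_max).
- exact (maxL_shift Phi_rs v_reg XY_splitting x0_max).
- exact (maxR_shift Phi_rs v_reg w0_longest XY_splitting x0_max).
- exact (max_mul_longest Phi_rs v_reg w0_longest XY_splitting x0_max y0_max).
Qed.
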